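(* Assume $\mathcal E$ is stable under pullback and $\mathcal F\subseteq\mathcal E$. Let $c$ be a closure operator on $\mathcal A$ and let $X\in\mathcal X$. If $R$ preserves products with $X$ (i.e. $\rho_{X\times Y}=\rho_X\times\rho_Y$ for every $Y\in\mathcal X$, via the canonical comparison), $\rho_X\in\mathcal E$, and $RX$ is $c$-compact, then $X$ is $c^\rho$-compact.
   Context: Standing setting. $\mathcal X$ and $\mathcal A$ are finitely complete categories; $\mathcal X$ carries a proper factorization system $(\mathcal E,\mathcal M)$ and $\mathcal A$ a proper factorization system $(\mathcal F,\mathcal N)$ (proper: every member of $\mathcal E$, resp. $\mathcal F$, is an epimorphism and every member of $\mathcal M$, resp. $\mathcal N$, is a monomorphism). $\mathcal A$ is a full reflective subcategory of $\mathcal X$ with reflector $R:\mathcal X\to\mathcal A$ and reflection (unit) $\rho_X:X\to RX$; as in the paper's setting, $\mathcal N\subseteq\mathcal M$ and $R\mathcal E\subseteq\mathcal F$. For $X\in\mathcal X$, $\operatorname{sub}X$ is the class $\mathcal M/X$ of $\mathcal M$-morphisms with codomain $X$, preordered by $m\le n$ iff $m=nj$ for some morphism $j$; for $A\in\mathcal A$, $\operatorname{sub}_{\mathcal A}A=\mathcal N/A$ with the same preorder. For $f:X\to Y$ and $m\in\operatorname{sub}X$, the image $f(m)\in\operatorname{sub}Y$ is the $\mathcal M$-part of the $(\mathcal E,\mathcal M)$-factorization of $fm$, and for $n\in\operatorname{sub}Y$ the preimage $f^{-1}(n)\in\operatorname{sub}X$ is the pullback of $n$ along $f$ (analogously in $\mathcal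 A$ using $(\mathcal F,\mathcal N)$). A closure operator $c$ on $\mathcal A$ (with respect to $\mathcal N$) is a family of maps $c_A:\operatorname{sub}_{\mathcal A}A\to\operatorname{sub}_{\mathcal A}A$ ($A\in\mathcal A$) such that $m\le c_A(m)$, $m\le n\Rightarrow c_A(m)\le c_A(n)$, and $f(c_A(m))\le c_B(f(m))$ for every morphism $f:A\to B$ of $\mathcal A$; closure operators on $\mathcal X$ (with respect to $\mathcal M$) are defined likewise. For an arbitrary morphism $g:M\to A$ of $\mathcal A$, write $g(1_M)$ for the $\mathcal N$-part of its $(\mathcal F,\mathcal N)$-factorization and put $c_A(g):=c_A(g(1_M))$. The $R$-initial lift of $c$ is the closure operator $c^\rho$ on $\mathcal X$ given by $c^\rho_X(m)=\rho_X^{-1}(c_{RX}(Rm))$ for $X\in\mathcal X$, $m\in\operatorname{sub}X$. For a closure operator $d$ on a category, an object $X$ is $d$-compact if for every object $Y$ the projection $\pi_Y:X\times Y\to Y$ is $d$-preserving, i.e. $\pi_Y(d_{X\times Y}(m))=d_Y(\pi_Y(m))$ for every subobject $m$ of $X\times Y$ (for $c$-compactness of an object of $\mathcal A$, $Y$ ranges over $\mathcal A$ and subobjects over $\operatorname{sub}_{\mathcal A}$; for $c^\rho$-compactness, over $\mathcal X$ and $\operatorname{sub}$). *)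

Set Implicit Arguments.
Unset Strict Implicit.

Record Cat := {
  ob :> Type;
  hom : ob -> ob -> Type;
  idm : forall A, hom A A;
  comp : forall A B C, hom B C -> hom A B -> hom A C;
  comp_idl : forall A B (f : hom A B), comp (idm B) f = f;
  comp_idr : forall A B (f : hom A B), comp f (idm A) = f;
  comp_assoc : forall A B C D (h : hom C D) (g : hom B C) (f : hom A B),
      comp h (comp g f) = comp (comp h g) f }.
Arguments hom {c} _ _.
Arguments idm {c} _.
Arguments comp {c A B C} _ _.
Notation "g ⊙ f" := (comp g f) (at level 40, left associativity).

Definition is_mono {C : Cat} {A B : C} (f : hom A B) :=
  forall Z (u v : hom Z A), f ⊙ u = f ⊙ v -> u = v.
Definition is_epi {C : Cat} {A B : C} (f : hom A B) :=
  forall Z (u v : hom B Z), u ⊙ f = v ⊙ f -> u = v.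
Definition is_iso {C : Cat} {A B : C} (f : hom A B) :=
  exists g : hom B A, g ⊙ f = idm A /\ f ⊙ g = idm B.

Definition morclass (C : Cat) := forall A B : C, hom A B -> Prop.

Record terminal (C : Cat) := {
  term_ob : C;
  to_term : forall A : C, hom A term_ob;
  term_uniq : forall A (u v : hom A term_ob), u = v }.

Record product (C : Cat) (A B : C) := {
  prod_ob : C;
  pr1 : hom prod_ob A;
  pr2 : hom prod_ob B;
  prod_univ : forall Z (f : hom Z A) (g : hom Z B),
      exists! h : hom Z prod_ob, pr1 ⊙ h = f /\ pr2 ⊙ h = g }.

(* pullback of n : N -> Y along f : X -> Y; pb_1 : P -> X is "f^{-1}(n)" *)
Record pullback (C : Cat) (X N Y : C) (f : hom X Y) (n : hom N Y) := {
  pb_ob : C;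
  pb_1 : hom pb_ob X;
  pb_2 : hom pb_ob N;
  pb_comm : f ⊙ pb_1 = n ⊙ pb_2;
  pb_univ : forall Z (u : hom Z X) (v : hom Z N), f ⊙ u = n ⊙ v ->
      exists! h : hom Z pb_ob, pb_1 ⊙ h = u /\ pb_2 ⊙ h = v }.

Record FinComplete (C : Cat) := {
  fc_term : terminal C;
  fc_prod : forall A B : C, product A B;
  fc_pb : forall (X N Y : C) (f : hom X Y) (n : hom N Y), pullback f n }.
Arguments fc_prod {C} _ _ _.
Arguments fc_pb {C} _ {X N Y} _ _.

Record FactSys (C : Cat) := {
  fs_E : morclass C;
  fs_M : morclass C;
  fs_fob : forall (A B : C) (f : hom A B), C;
  fs_fe : forall (A B : C) (f : hom A B), hom A (fs_fob f);
  fs_fm : forall (A B : C) (f : hom A B), hom (fs_fob f) B;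
  fs_fact : forall (A B : C) (f : hom A B), fs_fm f ⊙ fs_fe f = f;
  fs_fE : forall (A B : C) (f : hom A B), fs_E (fs_fe f);
  fs_fM : forall (A B : C) (f : hom A B), fs_M (fs_fm f);
  fs_E_isoL : forall (A B D : C) (e : hom A B) (i : hom B D),
      is_iso i -> fs_E e -> fs_E (i ⊙ e);
  fs_E_isoR : forall (A B D : C) (i : hom A B) (e : hom B D),
      is_iso i -> fs_E e -> fs_E (e ⊙ i);
  fs_M_isoL : forall (A B D : C) (m : hom A B) (i : hom B D),
      is_iso i -> fs_M m -> fs_M (i ⊙ m);
  fs_M_isoR : forall (A B D : C) (i : hom A B) (m : hom B D),
      is_iso i -> fs_M m -> fs_M (m ⊙ i);
  fs_diag : forall (A B D F : C) (e : hom A B) (m : hom D F)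
      (u : hom A D) (v : hom B F),
      fs_E e -> fs_M m -> m ⊙ u = v ⊙ e ->
      exists! d : hom B D, d ⊙ e = u /\ m ⊙ d = v }.
Arguments fs_E {C} _ {A B} _.
Arguments fs_M {C} _ {A B} _.
Arguments fs_fob {C} _ {A B} _.
Arguments fs_fe {C} _ {A B} _.
Arguments fs_fm {C} _ {A B} _.

Definition proper {C : Cat} (fs : FactSys C) :=
  (forall (A B : C) (e : hom A B), fs_E fs e -> is_epi e) /\
  (forall (A B : C) (m : hom A B), fs_M fs m -> is_mono m).

(* a morphism with codomain X; it is a subobject (element of sub X = M/X)
   when its map lies in M *)
Record arr (C : Cat) (X : C) := mkArr { a_dom : C; a_map : hom a_dom X }.
Arguments mkArr {C X a_dom} a_map.

Definition sub_le {C : Cat} {X : C} (m n : arr X) :=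
  exists j : hom (a_dom m) (a_dom n), a_map m = a_map n ⊙ j.
Definition sub_eq {C : Cat} {X : C} (m n : arr X) := sub_le m n /\ sub_le n m.

Definition image {C : Cat} (fs : FactSys C) {X Y : C} (f : hom X Y) (m : arr X)
  : arr Y := mkArr (fs_fm fs (f ⊙ a_map m)).
Definition preimage {C : Cat} (fc : FinComplete C) {X Y : C} (f : hom X Y)
  (n : arr Y) : arr X := mkArr (pb_1 (fc_pb fc f (a_map n))).

Definition clop (C : Cat) := forall X : C, arr X -> arr X.

Definition is_closure {C : Cat} (fs : FactSys C) (c : clop C) :=
  (forall (X : C) (m : arr X), fs_M fs (a_map m) ->
      fs_M fs (a_map (c X m)) /\ sub_le m (c X m)) /\
  (forall (X : C) (m n : arr X), fs_M fs (a_map m) -> fs_M fs (a_map n) ->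
      sub_le m n -> sub_le (c X m) (c X n)) /\
  (forall (X Y : C) (f : hom X Y) (m : arr X), fs_M fs (a_map m) ->
      sub_le (image fs f (c X m)) (c Y (image fs f m))).

Definition preserving {C : Cat} (fs : FactSys C) (d : clop C) {X Y : C}
  (f : hom X Y) :=
  forall m : arr X, fs_M fs (a_map m) ->
    sub_eq (image fs f (d X m)) (d Y (image fs f m)).

Definition compact {C : Cat} (fc : FinComplete C) (fs : FactSys C) (d : clop C)
  (X : C) := forall Y : C, preserving fs d (pr2 (fc_prod fc X Y)).

Section FullSub.
Variables (C : Cat) (P : C -> Prop).
Definition fs_ob := {x : C | P x}.
Definition fs_hom (a b : fs_ob) := hom (proj1_sig a) (proj1_sig b).
Definition fs_id (a : fs_ob) : fs_hom a a := idm (proj1_sig a).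
Definition fs_comp (a b d : fs_ob) (g : fs_hom b d) (f : fs_hom a b) : fs_hom a d :=
  g ⊙ f.
Lemma fs_idl a b (f : fs_hom a b) : fs_comp (fs_id b) f = f.
Proof. apply comp_idl. Qed.
Lemma fs_idr a b (f : fs_hom a b) : fs_comp f (fs_id a) = f.
Proof. apply comp_idr. Qed.
Lemma fs_assoc a b d e (h : fs_hom d e) (g : fs_hom b d) (f : fs_hom a b) :
  fs_comp h (fs_comp g f) = fs_comp (fs_comp h g) f.
Proof. apply comp_assoc. Qed.
Definition FullSub : Cat := Build_Cat fs_idl fs_idr fs_assoc.
End FullSub.

(* A = FullSub C P is reflective, with reflector R and units rho *)
Record Reflection (C : Cat) (P : C -> Prop) := {
  rR : C -> FullSub P;
  rho : forall X : C, hom X (proj1_sig (rR X));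
  rext : forall (X : C) (A : FullSub P),
      hom X (proj1_sig A) -> @hom (FullSub P) (rR X) A;
  rext_comm : forall (X : C) (A : FullSub P) (f : hom X (proj1_sig A)),
      (rext f : hom (proj1_sig (rR X)) (proj1_sig A)) ⊙ rho X = f;
  rext_uniq : forall (X : C) (A : FullSub P) (f : hom X (proj1_sig A))
      (g : @hom (FullSub P) (rR X) A),
      (g : hom (proj1_sig (rR X)) (proj1_sig A)) ⊙ rho X = f -> g = rext f }.
Arguments rR {C P} _ _.
Arguments rho {C P} _ _.
Arguments rext {C P} _ {X A} _.

Definition Rmor {C : Cat} {P : C -> Prop} (rf : Reflection P) {X Y : C}
  (f : hom X Y) : @hom (FullSub P) (rR rf X) (rR rf Y) :=
  rext rf (rho rf Y ⊙ f).

Definition arr_incl {C : Cat} {P : C -> Prop} {A : FullSub P}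
  (m : @arr (FullSub P) A) : arr (proj1_sig A) :=
  @mkArr C (proj1_sig A) (proj1_sig (a_dom m)) (a_map m).

(* the R-initial lift  c^rho_X(m) = rho_X^{-1}( c_{RX}( (Rm)(1) ) ) *)
Definition lift_clop {C : Cat} {P : C -> Prop} (fcX : FinComplete C)
  (fsA : FactSys (FullSub P)) (rf : Reflection P) (c : clop (FullSub P))
  : clop C :=
  fun X m =>
    preimage fcX (rho rf X)
      (arr_incl (c (rR rf X) (mkArr (fs_fm fsA (Rmor rf (a_map m)))))).

Definition R_preserves_products_with {C : Cat} {P : C -> Prop}
  (fcX : FinComplete C) (fcA : FinComplete (FullSub P)) (rf : Reflection P)
  (X : C) :=
  forall Y : C,
    exists phi : @hom (FullSub P) (rR rf (prod_ob (fc_prod fcX X Y)))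
                   (prod_ob (fc_prod fcA (rR rf X) (rR rf Y))),
      is_iso phi /\
      pr1 (fc_prod fcA (rR rf X) (rR rf Y)) ⊙ phi = Rmor rf (pr1 (fc_prod fcX X Y)) /\
      pr2 (fc_prod fcA (rR rf X) (rR rf Y)) ⊙ phi = Rmor rf (pr2 (fc_prod fcX X Y)).

(* The inclusion [pi(c^rho m) <= c^rho(pi m)] holds for every morphism, since [c^rho] is
   a closure operator. For the converse, compactness of [RX], transported along the
   isomorphism [R(X × Y) ~ RX × RY], gives [c((R(pi m))(1)) <= (R pi)(c((Rm)(1)))] in [A].
   This is pulled back along the units: after an [E]-cover (using [F <= E] and stability
   of [E] under pullback), a generalized point of [rho_Y^-1 c((R(pi m))(1))] comes from a
   point of [R(X × Y)] in [c((Rm)(1))]; since [rho_X] is in [E] and [R] preserves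
   [X × Y], a further [E]-cover lifts it to a point of [X × Y] in [c^rho m], and the
   diagonal property turns this into the required inclusion. *)

Set Implicit Arguments.
Unset Strict Implicit.

Section FactorizationSystem.
Variables (C : Cat) (fs : FactSys C).
Hypothesis fs_proper : proper fs.

Lemma diagonal_fill (A B D F : C) (e : hom A B) (m : hom D F) (u : hom A D) (v : hom B F) :
  fs_E fs e -> fs_M fs m -> m ⊙ u = v ⊙ e -> exists d, d ⊙ e = u /\ m ⊙ d = v.
Proof.
  intros He Hm Hsq. destruct (fs_diag He Hm Hsq) as [d [Hd _]]. exists d. exact Hd.
Qed.

Lemma sub_le_trans (X : C) (a b d : arr X) : sub_le a b -> sub_le b d -> sub_le a d.
Proof.
  intros [j1 H1] [j2 H2]. exists (j2 ⊙ j1). rewrite H1, H2, comp_assoc. reflexivity.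
Qed.

Lemma E_id (A : C) : fs_E fs (idm A).
Proof.
  pose proof (fs_fact fs (idm A)) as Hfact.
  assert (Hinv : fs_fe fs (idm A) ⊙ fs_fm fs (idm A) = idm _).
  { apply (proj2 fs_proper _ _ _ (fs_fM fs (idm A))).
    rewrite comp_assoc, Hfact, comp_idl, comp_idr. reflexivity. }
  rewrite <- Hfact. apply fs_E_isoL.
  - exists (fs_fe fs (idm A)). split; assumption.
  - apply fs_fE.
Qed.

(* The M-part of [e2 ⊙ e1] is invertible: the diagonal property gives a right inverse,
   which is also a left inverse because the E-part is epi. *)
Lemma E_comp (A B D : C) (e1 : hom A B) (e2 : hom B D) :
  fs_E fs e1 -> fs_E fs e2 -> fs_E fs (e2 ⊙ e1).
Proof.
  intros He1 He2.
  set (mu := fs_fm fs (e2 ⊙ e1)). set (eps := fs_fe fs (e2 ⊙ e1)).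
  assert (Hfact : mu ⊙ eps = e2 ⊙ e1) by apply fs_fact.
  destruct (diagonal_fill (u := eps) (v := e2) He1 (fs_fM fs _)) as [d1 [Hd1e Hd1m]].
  { exact Hfact. }
  destruct (diagonal_fill (u := d1) (v := idm _) He2 (fs_fM fs _)) as [d2 [Hd2e Hd2m]].
  { rewrite comp_idl. exact Hd1m. }
  assert (Hd2mu : d2 ⊙ mu = idm _).
  { apply (proj1 fs_proper _ _ _ (fs_fE fs (e2 ⊙ e1))).
    fold eps. rewrite <- comp_assoc, Hfact, comp_assoc, Hd2e, Hd1e, comp_idl.
    reflexivity. }
  rewrite <- Hfact. apply fs_E_isoL.
  - exists d2. split; assumption.
  - apply fs_fE.
Qed.

Lemma image_le_of_E (X Y Z : C) (f : hom X Y) (m : arr X) (b : arr Y)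
    (e : hom Z (a_dom m)) (h : hom Z (a_dom b)) :
  fs_E fs e -> fs_M fs (a_map b) -> f ⊙ a_map m ⊙ e = a_map b ⊙ h ->
  sub_le (image fs f m) b.
Proof.
  intros He Hb Hsq.
  destruct (diagonal_fill (u := h) (v := fs_fm fs (f ⊙ a_map m))
              (E_comp He (fs_fE fs _)) Hb) as [d [_ Hd]].
  { rewrite comp_assoc, fs_fact. symmetry. exact Hsq. }
  exists d. symmetry. exact Hd.
Qed.

Lemma le_image_of_E (X Y Z : C) (f : hom X Y) (m : arr X) (b : arr Y)
    (e : hom Z (a_dom b)) (h : hom Z (a_dom m)) :
  fs_E fs e -> a_map b ⊙ e = f ⊙ a_map m ⊙ h -> sub_le b (image fs f m).
Proof.
  intros He Hsq.
  destruct (diagonal_fill (u := fs_fe fs (f ⊙ a_map m) ⊙ h) (v := a_map b) He (fs_fM fs _))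
    as [d [_ Hd]].
  { rewrite comp_assoc, fs_fact. symmetry. exact Hsq. }
  exists d. symmetry. exact Hd.
Qed.

Lemma image_M (X Y : C) (f : hom X Y) (m : arr X) : fs_M fs (a_map (image fs f m)).
Proof. apply fs_fM. Qed.

Lemma image_le_factor (X Y : C) (f : hom X Y) (m : arr X) (b : arr Y) :
  sub_le (image fs f m) b -> exists h, f ⊙ a_map m = a_map b ⊙ h.
Proof.
  intros [j Hj]. exists (j ⊙ fs_fe fs (f ⊙ a_map m)).
  simpl in Hj. transitivity (fs_fm fs (f ⊙ a_map m) ⊙ fs_fe fs (f ⊙ a_map m)).
  - symmetry. apply fs_fact.
  - rewrite Hj. symmetry. apply comp_assoc.
Qed.

Lemma image_mono (X Y : C) (f : hom X Y) (m n : arr X) :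
  sub_le m n -> sub_le (image fs f m) (image fs f n).
Proof.
  intros [j Hj].
  apply (image_le_of_E (m := m) (b := image fs f n) (e := idm _)
           (h := fs_fe fs (f ⊙ a_map n) ⊙ j) (E_id _) (fs_fM fs _)).
  simpl. rewrite comp_idr, comp_assoc, fs_fact, Hj, comp_assoc. reflexivity.
Qed.

Lemma image_comp_le (X Y Z : C) (f : hom X Y) (g : hom Y Z) (m : arr X) :
  sub_le (image fs (g ⊙ f) m) (image fs g (image fs f m)).
Proof.
  apply (image_le_of_E (m := m) (b := image fs g (image fs f m)) (e := idm _)
           (h := fs_fe fs (g ⊙ fs_fm fs (f ⊙ a_map m)) ⊙ fs_fe fs (f ⊙ a_map m))
           (E_id _) (fs_fM fs _)).
  unfold image; cbn. rewrite comp_idr, comp_assoc, fs_fact, <- !comp_assoc, fs_fact.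
  reflexivity.
Qed.

Lemma image_comp_ge (X Y Z : C) (f : hom X Y) (g : hom Y Z) (m : arr X) :
  sub_le (image fs g (image fs f m)) (image fs (g ⊙ f) m).
Proof.
  apply (image_le_of_E (m := image fs f m) (b := image fs (g ⊙ f) m)
           (e := fs_fe fs (f ⊙ a_map m)) (h := fs_fe fs (g ⊙ f ⊙ a_map m))
           (fs_fE fs _) (fs_fM fs _)).
  simpl. rewrite <- comp_assoc, fs_fact, fs_fact, comp_assoc. reflexivity.
Qed.

Lemma M_pullback (X N Y : C) (f : hom X Y) (n : hom N Y) (p : pullback f n) :
  fs_M fs n -> fs_M fs (pb_1 p).
Proof.
  intros Hn.
  set (mu := fs_fm fs (pb_1 p)). set (eps := fs_fe fs (pb_1 p)).
  assert (Hfact : mu ⊙ eps = pb_1 p) by apply fs_fact.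
  destruct (diagonal_fill (e := eps) (u := pb_2 p) (v := f ⊙ mu) (fs_fE fs _) Hn)
    as [d [Hde Hdm]].
  { rewrite <- comp_assoc, Hfact. symmetry. apply pb_comm. }
  destruct (pb_univ p (u := mu) (v := d)) as [g [[Hg1 Hg2] _]].
  { symmetry. exact Hdm. }
  assert (Hg_eps : g ⊙ eps = idm _).
  { destruct (pb_univ p (pb_comm p)) as [h [_ Hh]].
    transitivity h; [symmetry|]; apply Hh; split.
    - rewrite comp_assoc, Hg1. exact Hfact.
    - rewrite comp_assoc, Hg2. exact Hde.
    - apply comp_idr.
    - apply comp_idr. }
  assert (Heps_g : eps ⊙ g = idm _).
  { apply (proj2 fs_proper _ _ _ (fs_fM fs (pb_1 p))).
    fold mu. rewrite comp_assoc, Hfact, comp_idr. exact Hg1. }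
  rewrite <- Hfact. apply fs_M_isoR.
  - exists g. split; assumption.
  - apply fs_fM.
Qed.

Variable c : clop C.
Arguments c : clear implicits.
Hypothesis c_closure : is_closure fs c.

Lemma closure_M (X : C) (m : arr X) : fs_M fs (a_map m) -> fs_M fs (a_map (c X m)).
Proof. intros Hm. exact (proj1 (proj1 c_closure X m Hm)). Qed.

Lemma closure_mono (X : C) (m n : arr X) :
  fs_M fs (a_map m) -> fs_M fs (a_map n) -> sub_le m n -> sub_le (c X m) (c X n).
Proof. apply (proj1 (proj2 c_closure)). Qed.

Lemma closure_image_le (X Y : C) (f : hom X Y) (m : arr X) :
  fs_M fs (a_map m) -> sub_le (image fs f (c X m)) (c Y (image fs f m)).
Proof. apply (proj2 (proj2 c_closure)). Qed.

Lemma closure_iso_le (X Z : C) (phi : hom X Z) (psi : hom Z X) (m : arr X) :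
  psi ⊙ phi = idm X -> phi ⊙ psi = idm Z -> fs_M fs (a_map m) ->
  sub_le (c Z (image fs phi m)) (image fs phi (c X m)).
Proof.
  intros Hpsiphi Hphipsi Hm.
  assert (Hback : sub_le (image fs psi (image fs phi m)) m).
  { apply (image_le_of_E (m := image fs phi m) (b := m) (e := fs_fe fs (phi ⊙ a_map m))
             (h := idm _) (fs_fE fs _) Hm).
    simpl. rewrite <- comp_assoc, fs_fact, comp_assoc, Hpsiphi, comp_idl, comp_idr.
    reflexivity. }
  destruct (image_le_factor (sub_le_trans (closure_image_le psi (image_M _ _))
              (closure_mono (image_M _ _) Hm Hback))) as [h Hh].
  apply (le_image_of_E (b := c Z (image fs phi m)) (m := c X m) (e := idm _) (h := h)
           (E_id _)).
  rewrite comp_idr, <- comp_assoc, <- Hh, comp_assoc, Hphipsi, comp_idl. reflexivity.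
Qed.

Lemma closure_image_le_of_preserving (X Z Y : C) (phi : hom X Z) (psi : hom Z X)
    (q : hom Z Y) (m : arr X) :
  psi ⊙ phi = idm X -> phi ⊙ psi = idm Z -> preserving fs c q -> fs_M fs (a_map m) ->
  sub_le (c Y (image fs (q ⊙ phi) m)) (image fs (q ⊙ phi) (c X m)).
Proof.
  intros Hpsiphi Hphipsi Hq Hm.
  apply (sub_le_trans (closure_mono (image_M _ _) (image_M _ _) (image_comp_le phi q m))).
  apply (sub_le_trans (proj2 (Hq _ (image_M _ _)))).
  apply (sub_le_trans (image_mono q (closure_iso_le Hpsiphi Hphipsi Hm))).
  apply image_comp_ge.
Qed.

End FactorizationSystem.

Section Reflection.
Variables (CX : Cat) (P : CX -> Prop) (rf : Reflection P).

Lemma rho_natural (X Y : CX) (f : hom X Y) :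
  (Rmor rf f : @hom CX _ _) ⊙ rho rf X = rho rf Y ⊙ f.
Proof. apply rext_comm. Qed.

Lemma Rmor_comp (X Y Z : CX) (f : hom X Y) (g : hom Y Z) :
  Rmor rf (g ⊙ f) = @comp (FullSub P) _ _ _ (Rmor rf g) (Rmor rf f).
Proof.
  symmetry. apply rext_uniq.
  change ((Rmor rf g : @hom CX _ _) ⊙ (Rmor rf f : @hom CX _ _) ⊙ rho rf X
          = rho rf Z ⊙ (g ⊙ f)).
  rewrite <- comp_assoc, rho_natural, comp_assoc, rho_natural, comp_assoc. reflexivity.
Qed.

Lemma rext_comp_l (W : CX) (A D : FullSub P) (w : hom W (proj1_sig A))
    (q : @hom (FullSub P) A D) :
  @comp (FullSub P) _ _ _ q (rext rf w) = rext rf ((q : @hom CX _ _) ⊙ w).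
Proof.
  apply rext_uniq.
  change ((q : @hom CX _ _) ⊙ (rext rf w : @hom CX _ _) ⊙ rho rf W
          = (q : @hom CX _ _) ⊙ w).
  rewrite <- comp_assoc, rext_comm. reflexivity.
Qed.

(* A map from any object of the ambient category into an object of the reflective
   subcategory factors uniquely through the unit, so products of the subcategory
   are jointly monic also for such maps. *)
Lemma reflective_product_jointly_monic (A B : FullSub P) (pr : product A B) (W : CX)
    (u v : hom W (proj1_sig (prod_ob pr))) :
  (pr1 pr : @hom CX _ _) ⊙ u = (pr1 pr : @hom CX _ _) ⊙ v ->
  (pr2 pr : @hom CX _ _) ⊙ u = (pr2 pr : @hom CX _ _) ⊙ v -> u = v.
Proof.
  intros H1 H2.
  rewrite <- (rext_comm rf u), <- (rext_comm rf v). f_equal.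
  destruct (prod_univ pr (pr1 pr ⊙ rext rf u) (pr2 pr ⊙ rext rf u)) as [h [_ Hh]].
  transitivity h; [symmetry|]; apply Hh; split; try reflexivity.
  - rewrite !rext_comp_l, H1. reflexivity.
  - rewrite !rext_comp_l, H2. reflexivity.
Qed.

End Reflection.

(* [reflect_sub fsA rf m] is the paper's (Rm)(1). *)
Definition reflect_sub (CX : Cat) (P : CX -> Prop) (fsA : FactSys (FullSub P))
    (rf : Reflection P) (Z : CX) (m : arr Z) : arr (rR rf Z) :=
  mkArr (fs_fm fsA (Rmor rf (a_map m))).

Section InitialLift.
Variables (CX : Cat) (P : CX -> Prop) (rf : Reflection P).
Variables (fcX : FinComplete CX) (fsX : FactSys CX) (fsA : FactSys (FullSub P)).
Hypotheses (HpropX : proper fsX) (HpropA : proper fsA).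
Hypothesis HNM : forall (A B : FullSub P) (n : @hom (FullSub P) A B),
  fs_M fsA n -> @fs_M CX fsX (proj1_sig A) (proj1_sig B) n.

Lemma Rmor_image_square (Z W : CX) (f : hom Z W) (m : arr Z) :
  @comp (FullSub P) _ _ _ (@comp (FullSub P) _ _ _ (Rmor rf f) (a_map (reflect_sub fsA rf m)))
    (fs_fe fsA (Rmor rf (a_map m)))
  = @comp (FullSub P) _ _ _ (a_map (reflect_sub fsA rf (image fsX f m)))
      (@comp (FullSub P) _ _ _ (fs_fe fsA (Rmor rf (a_map (image fsX f m))))
         (Rmor rf (fs_fe fsX (f ⊙ a_map m)))).
Proof.
  cbn [reflect_sub image a_map a_dom].
  rewrite <- comp_assoc, fs_fact, comp_assoc, fs_fact, <- !Rmor_comp, fs_fact.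
  reflexivity.
Qed.

Lemma reflect_sub_image_le (Z W : CX) (f : hom Z W) (m : arr Z) :
  sub_le (image fsA (Rmor rf f) (reflect_sub fsA rf m)) (reflect_sub fsA rf (image fsX f m)).
Proof.
  eapply image_le_of_E; [exact HpropA | apply fs_fE | apply fs_fM | ].
  apply Rmor_image_square.
Qed.

Hypothesis HRE : forall (A B : CX) (e : hom A B), fs_E fsX e -> fs_E fsA (Rmor rf e).

Lemma reflect_sub_image_ge (Z W : CX) (f : hom Z W) (m : arr Z) :
  sub_le (reflect_sub fsA rf (image fsX f m)) (image fsA (Rmor rf f) (reflect_sub fsA rf m)).
Proof.
  eapply le_image_of_E; [| symmetry; apply Rmor_image_square].
  apply (E_comp HpropA); [apply HRE, fs_fE | apply fs_fE].
Qed.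

Lemma preimage_rho_image_le (Z W : CX) (f : hom Z W)
    (s : arr (rR rf Z)) (s' : arr (rR rf W)) :
  fs_M fsA (a_map s') -> sub_le (image fsA (Rmor rf f) s) s' ->
  sub_le (image fsX f (preimage fcX (rho rf Z) (arr_incl s)))
         (preimage fcX (rho rf W) (arr_incl s')).
Proof.
  intros Hs' Hle.
  destruct (image_le_factor Hle) as [j Hj].
  set (T := fc_pb fcX (rho rf Z) (a_map (arr_incl s))).
  set (T' := fc_pb fcX (rho rf W) (a_map (arr_incl s'))).
  destruct (pb_univ T' (u := f ⊙ pb_1 T) (v := (j : @hom CX _ _) ⊙ pb_2 T)) as [h [[Hh _] _]].
  { rewrite comp_assoc, <- rho_natural, <- comp_assoc, (pb_comm T), !comp_assoc.
    exact (f_equal (fun k : @hom CX _ _ => k ⊙ pb_2 T) Hj). }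
  eapply (image_le_of_E HpropX (E_id HpropX _)).
  - exact (M_pullback HpropX _ (HNM Hs')).
  - rewrite comp_idr. symmetry. exact Hh.
Qed.

Variable c : clop (FullSub P).
Arguments c : clear implicits.
Hypothesis Hc : is_closure fsA c.

Lemma lift_clop_image_le (Z W : CX) (f : hom Z W) (m : arr Z) :
  sub_le (image fsX f (lift_clop fcX fsA rf c m))
         (lift_clop fcX fsA rf c (image fsX f m)).
Proof.
  apply preimage_rho_image_le; [apply (closure_M Hc), fs_fM |].
  eapply sub_le_trans; [apply (closure_image_le Hc), fs_fM |].
  apply (closure_mono Hc); [apply image_M | apply fs_fM | apply reflect_sub_image_le].
Qed.

End InitialLift.

Section ProductPreservation.
Variables (CX : Cat) (P : CX -> Prop) (rf : Reflection P).
Variables (fcX : FinComplete CX) (fcA : FinComplete (FullSub P)).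
Variables (fsX : FactSys CX) (fsA : FactSys (FullSub P)).
Hypothesis HpropX : proper fsX.
Hypothesis HEpb : forall (A B Z : CX) (f : hom A Z) (e : hom B Z),
  fs_E fsX e -> fs_E fsX (pb_1 (fc_pb fcX f e)).
Hypothesis HFE : forall (A B : FullSub P) (f : @hom (FullSub P) A B),
  fs_E fsA f -> @fs_E CX fsX (proj1_sig A) (proj1_sig B) f.
Variable X : CX.
Hypothesis Hpres : R_preserves_products_with fcX fcA rf X.
Hypothesis HrhoE : fs_E fsX (rho rf X).

Local Notation XY Y := (fc_prod fcX X Y).

Lemma Rmor_prod_jointly_monic (Y W : CX)
    (u v : hom W (proj1_sig (rR rf (prod_ob (XY Y))))) :
  (Rmor rf (pr1 (XY Y)) : @hom CX _ _) ⊙ u = (Rmor rf (pr1 (XY Y)) : @hom CX _ _) ⊙ v ->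
  (Rmor rf (pr2 (XY Y)) : @hom CX _ _) ⊙ u = (Rmor rf (pr2 (XY Y)) : @hom CX _ _) ⊙ v ->
  u = v.
Proof.
  intros H1 H2.
  destruct (Hpres Y) as [phi [[psi [Hpsiphi _]] [Hq1 Hq2]]].
  assert (Hphi : (phi : @hom CX _ _) ⊙ u = (phi : @hom CX _ _) ⊙ v).
  { apply (reflective_product_jointly_monic rf (pr := fc_prod fcA (rR rf X) (rR rf Y))).
    - change ((pr1 (fc_prod fcA (rR rf X) (rR rf Y)) : @hom CX _ _) ⊙ (phi : @hom CX _ _)
              = Rmor rf (pr1 (XY Y))) in Hq1.
      rewrite !comp_assoc, Hq1. exact H1.
    - change ((pr2 (fc_prod fcA (rR rf X) (rR rf Y)) : @hom CX _ _) ⊙ (phi : @hom CX _ _)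
              = Rmor rf (pr2 (XY Y))) in Hq2.
      rewrite !comp_assoc, Hq2. exact H2. }
  change ((psi : @hom CX _ _) ⊙ (phi : @hom CX _ _) = idm _) in Hpsiphi.
  rewrite <- (comp_idl u), <- (comp_idl v), <- Hpsiphi, <- !comp_assoc, Hphi.
  reflexivity.
Qed.

(* Points of [R(X × Y)] lying over points of [Y] lift, after an [E]-cover, to points of
   [X × Y]: the [X]-coordinate is obtained by pulling back [rho_X], which is in [E]. *)
Lemma rho_prod_lift (Y W : CX) (r : hom W (proj1_sig (rR rf (prod_ob (XY Y)))))
    (y : hom W Y) :
  rho rf Y ⊙ y = (Rmor rf (pr2 (XY Y)) : @hom CX _ _) ⊙ r ->
  exists (V : CX) (w : hom V W) (p : hom V (prod_ob (XY Y))),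
    fs_E fsX w /\ pr2 (XY Y) ⊙ p = y ⊙ w /\ rho rf (prod_ob (XY Y)) ⊙ p = r ⊙ w.
Proof.
  intros Hy.
  set (Q := fc_pb fcX ((Rmor rf (pr1 (XY Y)) : @hom CX _ _) ⊙ r) (rho rf X)).
  destruct (prod_univ (XY Y) (pb_2 Q) (y ⊙ pb_1 Q)) as [p [[Hp1 Hp2] _]].
  exists (pb_ob Q), (pb_1 Q), p.
  split; [apply HEpb, HrhoE | split; [exact Hp2 |]].
  apply (Rmor_prod_jointly_monic (Y := Y)).
  - transitivity (rho rf X ⊙ pb_2 Q).
    + rewrite comp_assoc, rho_natural, <- comp_assoc, Hp1. reflexivity.
    + rewrite comp_assoc. symmetry. apply pb_comm.
  - rewrite comp_assoc, rho_natural, <- comp_assoc, Hp2, comp_assoc, Hy, <- comp_assoc.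
    reflexivity.
Qed.

Lemma preimage_rho_le_image_proj (Y : CX) (s : arr (rR rf (prod_ob (XY Y))))
    (s' : arr (rR rf Y)) :
  sub_le s' (image fsA (Rmor rf (pr2 (XY Y))) s) ->
  sub_le (preimage fcX (rho rf Y) (arr_incl s'))
         (image fsX (pr2 (XY Y)) (preimage fcX (rho rf (prod_ob (XY Y))) (arr_incl s))).
Proof.
  intros [j Hj]. unfold image in j, Hj. cbn [a_dom a_map] in j, Hj.
  set (mu := fs_fm fsA (Rmor rf (pr2 (XY Y)) ⊙ a_map s)).
  set (eps := fs_fe fsA (Rmor rf (pr2 (XY Y)) ⊙ a_map s)).
  assert (Hfact : (mu : @hom CX _ _) ⊙ (eps : @hom CX _ _)
                  = (Rmor rf (pr2 (XY Y)) : @hom CX _ _) ⊙ a_map s)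
    by exact (fs_fact fsA _).
  change ((a_map s' : @hom CX _ _) = (mu : @hom CX _ _) ⊙ (j : @hom CX _ _)) in Hj.
  set (T' := fc_pb fcX (rho rf Y) (a_map s' : @hom CX _ _)).
  set (U := fc_pb fcX ((j : @hom CX _ _) ⊙ pb_2 T') (eps : @hom CX _ _)).
  destruct (rho_prod_lift (r := (a_map s : @hom CX _ _) ⊙ pb_2 U) (y := pb_1 T' ⊙ pb_1 U))
    as (V & w & p & Hw & Hp2 & Hp).
  { rewrite comp_assoc, (pb_comm T').
    transitivity ((mu : @hom CX _ _) ⊙ (j : @hom CX _ _) ⊙ pb_2 T' ⊙ pb_1 U).
    - rewrite <- Hj. reflexivity.
    - rewrite <- (comp_assoc (mu : @hom CX _ _)), <- comp_assoc, (pb_comm U), comp_assoc,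
        Hfact, <- comp_assoc.
      reflexivity. }
  set (T := fc_pb fcX (rho rf (prod_ob (XY Y))) (a_map s : @hom CX _ _)).
  destruct (pb_univ T (u := p) (v := pb_2 U ⊙ w)) as [g [[Hg _] _]].
  { rewrite Hp, <- comp_assoc. reflexivity. }
  apply (le_image_of_E (b := mkArr (pb_1 T')) (m := mkArr (pb_1 T))
           (e := pb_1 U ⊙ w) (h := g)).
  - apply (E_comp HpropX Hw), HEpb, HFE, fs_fE.
  - simpl. rewrite <- comp_assoc, Hg, Hp2, comp_assoc. reflexivity.
Qed.

Hypothesis HpropA : proper fsA.
Hypothesis HRE : forall (A B : CX) (e : hom A B), fs_E fsX e -> fs_E fsA (Rmor rf e).
Variable c : clop (FullSub P).
Arguments c : clear implicits.
Hypothesis Hc : is_closure fsA c.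
Hypothesis Hcpt : compact fcA fsA c (rR rf X).
Arguments Hcpt : clear implicits.

Lemma closure_reflect_sub_proj_le (Y : CX) (m : arr (prod_ob (XY Y))) :
  sub_le (c (rR rf Y) (reflect_sub fsA rf (image fsX (pr2 (XY Y)) m)))
         (image fsA (Rmor rf (pr2 (XY Y))) (c _ (reflect_sub fsA rf m))).
Proof.
  destruct (Hpres Y) as [phi [[psi [Hpsiphi Hphipsi]] [_ Hq2]]].
  eapply sub_le_trans.
  - apply (closure_mono Hc); [apply fs_fM | apply image_M |].
    apply (reflect_sub_image_ge HpropA HRE).
  - rewrite <- Hq2.
    apply (closure_image_le_of_preserving HpropA Hc Hpsiphi Hphipsi (Hcpt _)), fs_fM.
Qed.

End ProductPreservation.

Theorem theorem2p7
  (CX : Cat) (P : CX -> Prop)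
  (fcX : FinComplete CX) (fsX : FactSys CX)
  (fcA : FinComplete (FullSub P)) (fsA : FactSys (FullSub P))
  (rf : Reflection P)
  (HpropX : proper fsX) (HpropA : proper fsA)
  (HNM : forall (A B : FullSub P) (n : @hom (FullSub P) A B),
      fs_M fsA n -> @fs_M CX fsX (proj1_sig A) (proj1_sig B) n)
  (HRE : forall (A B : CX) (e : hom A B), fs_E fsX e -> fs_E fsA (Rmor rf e))
  (HEpb : forall (A B Z : CX) (f : hom A Z) (e : hom B Z),
      fs_E fsX e -> fs_E fsX (pb_1 (fc_pb fcX f e)))
  (HFE : forall (A B : FullSub P) (f : @hom (FullSub P) A B),
      fs_E fsA f -> @fs_E CX fsX (proj1_sig A) (proj1_sig B) f)
  (c : clop (FullSub P)) (Hc : is_closure fsA c)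
  (X : CX)
  (Hpres : R_preserves_products_with fcX fcA rf X)
  (HrhoE : fs_E fsX (rho rf X))
  (Hcpt : compact fcA fsA c (rR rf X)) :
  compact fcX fsX (lift_clop fcX fsA rf c) X.
Proof.
  intros Y m _. split.
  - apply lift_clop_image_le; assumption.
  - apply (preimage_rho_le_image_proj (fcA := fcA) (fsA := fsA)); try assumption.
    apply (closure_reflect_sub_proj_le (fcA := fcA)); assumption.
Qed.
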